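(* Fix $\lambda\in(0,\tfrac1{16})$, $\nu=\sqrt{1-16\lambda}$, $t_1=\frac{1-\nu}{4\lambda}$, an integer $l\ge2$, $\ell=(l-1)(l+2)$, $t_i\in(0,t_1)$, and let $G(t)=\tfrac12-\lambda t$, $\beta(t)=1-2tG(t)$, $\gamma(t)=2G(t)$. For $\kappa\in\mathbb{R}$ define $D(t)=\ell+(\kappa-4)\beta'(t)-(\kappa^2-6\kappa+8)\gamma(t)$. If $\kappa\in[0,4]$, then for all $t\in[t_i,t_1]$, $D(t)\ge0$ and $D'(t)\le0$. *)

From Stdlib Require Import Reals Lra.
From Coquelicot Require Import Coquelicot.
Open Scope R_scope.

Definition Gf (lam t : R) : R := / 2 - lam * t.
Definition betaf (lam t : R) : R := 1 - 2 * t * Gf lam t.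
Definition gammaf (lam t : R) : R := 2 * Gf lam t.
Definition ellR (l : nat) : R := (INR l - 1) * (INR l + 2).
Definition Df (lam : R) (l : nat) (kappa t : R) : R :=
  ellR l + (kappa - 4) * Derive (betaf lam) t
  - (kappa ^ 2 - 6 * kappa + 8) * gammaf lam t.
Definition nuR (lam : R) : R := sqrt (1 - 16 * lam).
Definition t1R (lam : R) : R := (1 - nuR lam) / (4 * lam).

(* Since beta'(t) = 4 lambda t - 1 and kappa^2 - 6 kappa + 8 = (kappa - 2)(kappa - 4), D is affine in t:
   D(t) = ell + (4 - kappa)(kappa (1 - 2 lambda t) - 1), with slope 2 lambda kappa (kappa - 4) <= 0.
   On [t_i, t_1] we have lambda t <= lambda t_1 = (1 - nu)/4 <= 1/4, so kappa (1 - 2 lambda t) >= 0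
   and D(t) >= ell - (4 - kappa) >= 0 because ell >= 4. *)
From Stdlib Require Import Reals Lra.
From Coquelicot Require Import Coquelicot.
Open Scope R_scope.

Lemma Derive_betaf (lam t : R) : Derive (betaf lam) t = 4 * lam * t - 1.
Proof.
  apply is_derive_unique; unfold betaf, Gf.
  auto_derive; [exact I | field].
Qed.

Lemma Df_eq (lam : R) (l : nat) (kappa t : R) :
  Df lam l kappa t = ellR l + (4 - kappa) * (kappa * (1 - 2 * lam * t) - 1).
Proof. unfold Df, gammaf, Gf; rewrite Derive_betaf; field. Qed.

Lemma Derive_Df (lam : R) (l : nat) (kappa t : R) :
  Derive (Df lam l kappa) t = 2 * lam * (kappa * (kappa - 4)).
Proof.
  rewrite (Derive_ext _ _ _ (Df_eq lam l kappa)).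
  apply is_derive_unique; auto_derive; [exact I | ring].
Qed.

Lemma ellR_ge_4 (l : nat) : (2 <= l)%nat -> 4 <= ellR l.
Proof.
  intro hl; assert (2 <= INR l) by (apply (le_INR 2); exact hl).
  unfold ellR; nra.
Qed.

Lemma lam_mul_t1R_le (lam : R) : 0 < lam -> lam * t1R lam <= / 4.
Proof.
  intro hlam; assert (0 <= nuR lam) by apply sqrt_pos.
  unfold t1R; field_simplify; lra.
Qed.

Theorem lemma1 (lam : R) (l : nat) (ti kappa : R)
  (hlam : 0 < lam < / 16) (hl : (2 <= l)%nat)
  (hti : 0 < ti < t1R lam) (hkappa : 0 <= kappa <= 4) :
  forall t : R, ti <= t <= t1R lam ->
    0 <= Df lam l kappa t /\ Derive (Df lam l kappa) t <= 0.
Proof.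
  intros t ht; rewrite Df_eq, Derive_Df; split.
  - pose proof (ellR_ge_4 l hl).
    assert (hlt : lam * t <= / 4)
      by (apply Rle_trans with (lam * t1R lam); [nra | exact (lam_mul_t1R_le lam (proj1 hlam))]).
    assert (0 <= kappa * (1 - 2 * lam * t)) by (apply Rmult_le_pos; lra).
    set (x := kappa * (1 - 2 * lam * t)) in *.
    assert (0 <= (4 - kappa) * x) by (apply Rmult_le_pos; lra).
    lra.
  - apply Rmult_le_0_l; nra.
Qed.
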